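(* For every $h\geq 1$, the linear polyacene $L_h$ satisfies $$W_e(L_h)=\tfrac16 h(50h^2+69h+43)\qquad\text{and}\qquad WW_e(L_h)=\tfrac16 h(25h^3+71h^2+77h+79).$$
   Context: The linear polyacene $L_h$ is the benzenoid system (subgraph of the hexagonal lattice) consisting of $h$ hexagons connected linearly, each consecutive pair of hexagons sharing one edge, with all shared edges parallel (so $L_h$ has $4h+2$ vertices and $5h+1$ edges; $L_1$ is the 6-cycle). The distance $d(e,f)$ between edges is the distance between $e$ and $f$ as vertices of the line graph. The edge-Wiener index is $W_e(G)=\sum_{\{e,f\}\subseteq E(G)}d(e,f)$ and the edge-hyper-Wiener index is $WW_e(G)=\frac12\sum_{\{e,f\}\subseteq E(G)}d(e,f)+\frac12\sum_{\{e,f\}\subseteq E(G)}d(e,f)^2$, sums over unordered pairs of distinct edges. *)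

From HB Require Import structures.
From mathcomp Require Import all_boot all_order all_algebra.
Set Implicit Arguments. Unset Strict Implicit. Unset Printing Implicit Defensive.
Import Order.TTheory GRing.Theory Num.Theory.

Definition ball (T : finType) (r : rel T) (k : nat) (x : T) : {set T} :=
  iter k (fun S : {set T} => S :|: [set y | [exists z in S, r z y]]) [set x].

(* graph distance: number of radii k (< #|T|) whose ball misses y.
   For a connected graph this is exactly the shortest-path distance,
   since every distance is < #|T|. *)
Definition gdist (T : finType) (r : rel T) (x y : T) : nat :=
  \sum_(k < #|T|) (y \notin ball r k x).

(* vertices: two rows (0 = top, 1 = bottom) of 2h+1 vertices each *)
Definition Lvert (h : nat) : finType := ('I_2 * 'I_(2 * h + 1))%type.

(* edges: horizontal edges along each row, and vertical rungs at even columns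
   0,2,...,2h ; hexagon k is spanned by columns 2k,2k+1,2k+2 *)
Definition Ladj (h : nat) : rel (Lvert h) := fun u v =>
  ((u.1 == v.1) && ((u.2.+1 == v.2 :> nat) || (v.2.+1 == u.2 :> nat)))
  || [&& u.2 == v.2, u.1 != v.1 & ~~ odd u.2].

Definition is_Ledge (h : nat) (A : {set Lvert h}) : bool :=
  [exists u, exists v, Ladj u v && (A == [set u; v])].

Definition Ledge (h : nat) : finType := {A : {set Lvert h} | is_Ledge A}.

Definition lineadj (h : nat) : rel (Ledge h) := fun e f =>
  (e != f) && (val e :&: val f != set0).

Definition edist (h : nat) (e f : Ledge h) : nat := gdist (@lineadj h) e f.

Definition We (h : nat) : nat :=
  \sum_(e : Ledge h) \sum_(f : Ledge h | enum_rank e < enum_rank f) edist e f.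

Definition We2 (h : nat) : nat :=
  \sum_(e : Ledge h) \sum_(f : Ledge h | enum_rank e < enum_rank f) (edist e f) ^ 2.

Definition WWe (h : nat) : rat :=
  ((1 / 2) * (We h)%:R + (1 / 2) * (We2 h)%:R)%R.

From HB Require Import structures.
From mathcomp Require Import all_boot all_order all_algebra.
From mathcomp Require Import zify ring.
Import Order.TTheory GRing.Theory Num.Theory.

(* The 5h + 1 edges of L_h are indexed by 5k + t, edge t of hexagon k.  The
   distance between two edges is given by an explicit formula [hdist]: a table
   inside one hexagon and, across hexagons, a table entry plus 2 for every
   hexagon in between.  A function on the vertices of a finite graph that
   vanishes only at x, grows by at most one along edges and always decreases
   along some edge towards x is the distance from x; checking these three
   properties for [hdist] is a finite case analysis.  Appending a hexagon then
   gives linear recurrences for the sums of distances, whose solutions are the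
   stated polynomials. *)

Lemma sum_ord_ltn n d : \sum_(k < n) (k < d) = minn d n.
Proof. by elim: n => [|n IHn]; rewrite ?big_ord0 ?minn0 // big_ord_recr /= IHn; lia. Qed.

Section BallDistance.
Variables (T : finType) (r : rel T) (x : T) (D : T -> nat).
Hypothesis D_eq0 : forall y, (D y == 0) = (y == x).
Hypothesis D_step : forall z y, r z y -> D y <= (D z).+1.
Hypothesis D_pred : forall y, 0 < D y -> exists2 z, r z y & (D z).+1 = D y.

Lemma mem_ball k y : (y \in ball r k x) = (D y <= k).
Proof.
elim: k y => [|k IHk] y; first by rewrite /ball /= in_set1 leqn0 D_eq0.
rewrite /ball iterS -/(ball r k x) in_setU in_set IHk.
apply/idP/idP => [/orP[/leqW // | /existsP[z /andP[]]] | Dy].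
  by rewrite IHk => Dz /D_step/leq_trans->.
have [//|Dy_gt] := leqP; have [z rzy Dz] := @D_pred y (leq_ltn_trans (leq0n k) Dy_gt).
by apply/existsP; exists z; rewrite IHk rzy andbT -ltnS Dz.
Qed.

Lemma dist_lt_card y : D y < #|T|.
Proof.
have D_onto n w m : D w = n -> m <= n -> exists z, D z = m.
  elim: n w => [|n IHn] w Dw; first by rewrite leqn0 => /eqP->; exists w.
  rewrite leq_eqVlt => /orP[/eqP->|]; first by exists w.
  have [|z _ Dz] := @D_pred w; first by rewrite Dw.
  by apply: (IHn z); apply: succn_inj; rewrite Dz.
have sub : {subset iota 0 (D y).+1 <= map D (enum T)}.
  move=> m; rewrite mem_iota ltnS; case/(D_onto _ y m erefl) => z <-.
  exact/map_f/mem_enum.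
by have := uniq_leq_size (iota_uniq 0 (D y).+1) sub; rewrite size_iota size_map -cardE.
Qed.

Lemma gdist_eq y : gdist r x y = D y.
Proof.
rewrite /gdist; under eq_bigr => k _ do rewrite mem_ball -ltnNge.
by rewrite sum_ord_ltn; apply/minn_idPl/ltnW/dist_lt_card.
Qed.
End BallDistance.

Lemma sum_rank_lt_pairs (T : finType) (F : T -> T -> nat) :
  (forall x y, F x y = F y x) -> (forall x, F x x = 0) ->
  2 * \sum_x \sum_(y | enum_rank x < enum_rank y) F x y = \sum_x \sum_y F x y.
Proof.
move=> F_sym F_diag.
have split_row x : \sum_y F x y =
    \sum_(y | enum_rank x < enum_rank y) F x y + \sum_(y | enum_rank y < enum_rank x) F x y.
  rewrite (bigID (fun y => enum_rank x < enum_rank y)) /=; congr (_ + _).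
  rewrite (bigID (fun y => enum_rank y < enum_rank x)) /= [X in _ + X]big1 ?addn0.
    by apply: eq_bigl => y; case: ltngtP.
  move=> y /andP[xy yx]; suff -> : x = y by [].
  by apply/enum_rank_inj/val_inj; move: xy yx => /=; lia.
under [RHS]eq_bigr => x _ do rewrite split_row.
rewrite big_split /= mul2n -addnn; congr (_ + _).
rewrite (exchange_big_dep xpredT) //=.
by apply: eq_bigr => y _; apply: eq_bigr => x _; rewrite F_sym.
Qed.

Lemma setI_set2_neq0 (T : finType) (a b : T) (B : {set T}) :
  ([set a; b] :&: B != set0) = (a \in B) || (b \in B).
Proof.
apply/set0Pn/orP => [[y /setIP[]]|[a_B|b_B]].
- by rewrite !inE => /orP[]/eqP-> ?; [left | right].
- by exists a; rewrite !inE eqxx a_B.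
- by exists b; rewrite !inE eqxx orbT b_B.
Qed.

(* Edge t of hexagon k is its left rung (column 2k) for t = 0, one of its top
   edges for t = 1, 2 and one of its bottom edges for t = 3, 4; index 5h is the
   right rung of the last hexagon. *)
Definition end1_row (t : nat) : nat := (t == 3) || (t == 4).
Definition end1_col (k t : nat) : nat := 2 * k + (t == 2) + (t == 4).
Definition end2_row (t : nat) : nat := [|| t == 0, t == 3 | t == 4].
Definition end2_col (k t : nat) : nat := 2 * k + (t != 0) + (t == 2) + (t == 4).

Definition is_end (k t r c : nat) : bool :=
  (r == end1_row t) && (c == end1_col k t) || (r == end2_row t) && (c == end2_col k t).

Definition share_end (k t k2 t2 : nat) : bool :=
  is_end k2 t2 (end1_row t) (end1_col k t) || is_end k2 t2 (end2_row t) (end2_col k t).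

Definition near_dist (t t2 : nat) : nat :=
  nth 0 (nth [::] [:: [:: 0; 1; 2; 1; 2]; [:: 1; 0; 1; 2; 3]; [:: 2; 1; 0; 3; 2];
                      [:: 1; 2; 3; 0; 1]; [:: 2; 3; 2; 1; 0]] t) t2.

Definition next_dist (t t2 : nat) : nat :=
  nth 0 (nth [::] [:: [:: 3; 3; 4; 3; 4]; [:: 2; 2; 3; 3; 4]; [:: 1; 1; 2; 2; 3];
                      [:: 2; 3; 4; 2; 3]; [:: 1; 2; 3; 1; 2]] t) t2.

Definition hdist (k t k2 t2 : nat) : nat :=
  if k < k2 then 2 * (k2 - k - 1) + next_dist t t2
  else if k2 < k then 2 * (k - k2 - 1) + next_dist t2 t
  else near_dist t t2.

Definition idist (i j : nat) : nat := hdist (i %/ 5) (i %% 5) (j %/ 5) (j %% 5).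

Ltac case5 t := let H := fresh in case: t => [|[|[|[|[|t]]]]] H //.

Ltac decide_ifs :=
  repeat match goal with
  | |- context [if ?c then _ else _] =>
      first [ have -> : c = true by lia | have -> : c = false by lia | case: ifP => ? ]
  end.

Ltac hdist_lia := rewrite /hdist; decide_ifs; rewrite /next_dist /near_dist /=; lia.

Ltac unfold_ends := rewrite /share_end /is_end /end1_row /end2_row /end1_col /end2_col /=.

Lemma hdist_shift k t k2 t2 n : hdist (k + n) t (k2 + n) t2 = hdist k t k2 t2.
Proof. by rewrite /hdist !ltn_add2r !subnDr. Qed.

Lemma idist_shift i j n : idist (i + 5 * n) (j + 5 * n) = idist i j.
Proof.
by rewrite /idist -!(addnC (5 * n)) !(mulnC 5) !modnMDl !divnMDl // !(addnC n) hdist_shift.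
Qed.

Lemma hdist_far k t k2 t2 n : k < k2 -> hdist k t (k2 + n) t2 = hdist k t k2 t2 + 2 * n.
Proof. by move=> lt_k; rewrite /hdist lt_k ltn_addr //; lia. Qed.

Lemma idist_far i j n : i < 5 -> 5 <= j -> idist i (j + 5 * n) = idist i j + 2 * n.
Proof.
move=> lt_i le_j; rewrite /idist -(addnC (5 * n)) (mulnC 5) modnMDl divnMDl // addnC.
by rewrite hdist_far // divn_small // divn_gt0.
Qed.

Lemma hdist_sym k t k2 t2 : t < 5 -> t2 < 5 -> hdist k t k2 t2 = hdist k2 t2 k t.
Proof. case5 t; case5 t2; hdist_lia. Qed.

Lemma idist_sym i j : idist i j = idist j i.
Proof. by rewrite /idist hdist_sym ?ltn_pmod. Qed.

Lemma hdist_eq0 k t k2 t2 :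
  t < 5 -> t2 < 5 -> (hdist k t k2 t2 == 0) = (k == k2) && (t == t2).
Proof. case5 t; case5 t2; hdist_lia. Qed.

Lemma idist_eq0 i j : (idist i j == 0) = (i == j).
Proof.
rewrite /idist hdist_eq0 ?ltn_pmod //.
by apply/idP/eqP => [/andP[/eqP ? /eqP ?]|->]; [lia | rewrite !eqxx].
Qed.

Lemma idist_nn i : idist i i = 0.
Proof. by apply/eqP; rewrite idist_eq0. Qed.

Lemma share_end_hdist k t k2 t2 : t < 5 -> t2 < 5 -> (k != k2) || (t != t2) ->
  share_end k t k2 t2 = (hdist k t k2 t2 == 1).
Proof. case5 t; case5 t2; unfold_ends; hdist_lia. Qed.

Lemma is_end_inj k t k2 t2 : t < 5 -> t2 < 5 ->
  is_end k2 t2 (end1_row t) (end1_col k t) -> is_end k2 t2 (end2_row t) (end2_col k t) ->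
  (k == k2) && (t == t2).
Proof. case5 t; case5 t2; unfold_ends; lia. Qed.

Lemma ends_bound h k t : t < 5 -> 5 * k + t < 5 * h + 1 ->
  [/\ end1_row t < 2, end2_row t < 2, end1_col k t < 2 * h + 1 & end2_col k t < 2 * h + 1].
Proof. case5 t; unfold_ends => i_lt; split; lia. Qed.

Lemma next_dist_gt0 t t2 : t < 5 -> t2 < 5 -> 0 < next_dist t t2.
Proof. by case5 t; case5 t2. Qed.

Lemma hdist_same k t t2 : hdist k t k t2 = near_dist t t2.
Proof. by rewrite /hdist ltnn. Qed.

Lemma hdist_next k t t2 : hdist k t k.+1 t2 = next_dist t t2.
Proof. by rewrite /hdist ltnSn subSnn. Qed.

Lemma hdist1_near k t k2 t2 : t < 5 -> t2 < 5 -> hdist k t k2 t2 = 1 ->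
  k2 = k \/ k2 = k.+1 \/ k = k2.+1.
Proof.
move=> t_lt t2_lt; have := next_dist_gt0 _ _ t_lt t2_lt.
have := next_dist_gt0 _ _ t2_lt t_lt.
by rewrite /hdist; case: ifP => ?; [|case: ifP => ?]; lia.
Qed.

Lemma hdist_step k t k2 t2 k3 t3 : t < 5 -> t2 < 5 -> t3 < 5 ->
  hdist k2 t2 k3 t3 = 1 -> hdist k t k3 t3 <= (hdist k t k2 t2).+1.
Proof.
move=> + t2_lt t3_lt adj; have near := hdist1_near _ _ _ _ t2_lt t3_lt adj.
move: adj; case: near => [->|[->|->]]; [rewrite hdist_same | rewrite hdist_next |
  rewrite hdist_sym // hdist_next];
by move=> /eqP; move: t2_lt t3_lt; case5 t2; case5 t3 => // _; case5 t; hdist_lia.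
Qed.

Lemma idist_step i m j : idist m j = 1 -> idist i j <= (idist i m).+1.
Proof. by move=> adj; apply: hdist_step; rewrite ?ltn_pmod. Qed.

(* A neighbour of edge (k2, t2) one step closer to edge (k, t), encoded as
   (b, t3) for the edge (k2 - b, t3), resp. (k2 + b, t3): it is taken on the
   right exactly when (k, t) lies in a later hexagon or in the right half of
   hexagon k2. *)
Definition left_step (t t2 : nat) : nat * nat :=
  nth (0, 0) (nth [::] [:: [:: (1, 2); (1, 2); (0, 1); (1, 4); (0, 3)];
                           [:: (1, 2); (1, 2); (0, 1); (0, 0); (0, 3)];
                           [:: (1, 2); (1, 2); (0, 1); (0, 0); (0, 3)];
                           [:: (1, 4); (0, 0); (0, 1); (1, 4); (0, 3)];
                           [:: (1, 4); (0, 0); (0, 1); (1, 4); (0, 3)]] t) t2.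

Definition right_step (t t2 : nat) : nat * nat :=
  nth (0, 0) (nth [::] [:: [:: (0, 1); (0, 2); (1, 1); (0, 4); (1, 3)];
                           [:: (0, 1); (0, 2); (1, 1); (0, 4); (1, 0)];
                           [:: (0, 1); (0, 2); (1, 1); (0, 4); (1, 0)];
                           [:: (0, 3); (0, 2); (1, 0); (0, 4); (1, 3)];
                           [:: (0, 3); (0, 2); (1, 0); (0, 4); (1, 3)]] t) t2.

Lemma hdist_pred h k t k2 t2 : t < 5 -> t2 < 5 ->
  5 * k + t < 5 * h + 1 -> 5 * k2 + t2 < 5 * h + 1 -> 1 < hdist k t k2 t2 ->
  exists k3 t3, [/\ t3 < 5, 5 * k3 + t3 < 5 * h + 1,
                    hdist k3 t3 k2 t2 = 1 & (hdist k t k3 t3).+1 = hdist k t k2 t2].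
Proof.
move=> t_lt t2_lt i_lt j_lt D_gt1.
case: (boolP ((k2 < k) || (k == k2) && (t \in [:: 2; 4]))) => dir.
  exists (k2 + (right_step t t2).1), (right_step t t2).2.
  move: t_lt t2_lt dir D_gt1 i_lt j_lt; case5 t; case5 t2;
  by rewrite /right_step /= !inE => dir D_gt1 ? ?; split; move: D_gt1; hdist_lia.
exists (k2 - (left_step t t2).1), (left_step t t2).2.
move: t_lt t2_lt dir D_gt1 i_lt j_lt; case5 t; case5 t2;
by rewrite /left_step /= !inE => dir D_gt1 ? ?; split; move: D_gt1; hdist_lia.
Qed.

Lemma idist_pred h i j : i < 5 * h + 1 -> j < 5 * h + 1 -> 1 < idist i j ->
  exists m, [/\ m < 5 * h + 1, idist m j = 1 & (idist i m).+1 = idist i j].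
Proof.
move=> i_lt j_lt D_gt1; have divE x : 5 * (x %/ 5) + x %% 5 = x by lia.
have := hdist_pred h (i %/ 5) (i %% 5) (j %/ 5) (j %% 5); rewrite !ltn_pmod // !divE.
case/(_ isT isT i_lt j_lt D_gt1) => k3 [t3 [t3_lt m_lt adj geo]]; exists (5 * k3 + t3).
by rewrite /idist; have [-> ->] : (5 * k3 + t3) %/ 5 = k3 /\ (5 * k3 + t3) %% 5 = t3 by lia.
Qed.

Lemma sum_nat_addn (F : nat -> nat) n m :
  \sum_(0 <= i < n + m) F i = \sum_(0 <= i < n) F i + \sum_(0 <= i < m) F (i + n).
Proof.
rewrite (big_cat_nat _ (leq_addr m n)) //=; congr (_ + _).
by rewrite -{1}[n]add0n big_addn addKn.
Qed.

Lemma sum_nat5 (G : nat -> nat) : \sum_(0 <= t < 5) G t = G 0 + G 1 + G 2 + G 3 + G 4.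
Proof. by rewrite !big_nat_recr //= big_geq. Qed.

(* Passing from L_h to L_(h+1) appends the indices 5h + 1, ..., 5h + 5. *)
Section DistanceSums.
Variable f : nat -> nat.

Definition dist_sum h :=
  \sum_(0 <= i < 5 * h + 1) \sum_(0 <= j < 5 * h + 1) f (idist i j).
Definition border_sum h :=
  \sum_(0 <= i < 5 * h + 1) \sum_(0 <= t < 5) f (idist i (t + (5 * h + 1))).
Definition cross_sum h :=
  \sum_(0 <= i < 5) \sum_(0 <= t < 5) f (idist i (t + (5 * h + 6))).
Definition block_sum :=
  \sum_(0 <= s < 5) \sum_(0 <= t < 5) f (idist (s + 1) (t + 1)).

Lemma dist_sumS h : dist_sum h.+1 = dist_sum h + 2 * border_sum h + block_sum.
Proof.
rewrite /dist_sum /border_sum /block_sum (_ : 5 * h.+1 + 1 = (5 * h + 1) + 5); last lia.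
rewrite sum_nat_addn; under eq_bigr => i _ do rewrite sum_nat_addn.
rewrite big_split /=; under [X in _ + _ + X]eq_bigr => s _ do rewrite sum_nat_addn.
rewrite big_split /= [in X in _ + _ + (X + _)]exchange_big /=.
have shift_new x : x + (5 * h + 1) = (x + 1) + 5 * h by lia.
under [X in _ + _ + (X + _)]eq_bigr => i _ do under eq_bigr => t _ do rewrite idist_sym.
under [X in _ + _ + (_ + X)]eq_bigr => i _ do
  under eq_bigr => t _ do rewrite !shift_new idist_shift.
lia.
Qed.

Lemma border_sumS h : border_sum h.+1 = border_sum h + cross_sum h.
Proof.
rewrite /border_sum /cross_sum (_ : 5 * h.+1 + 1 = 5 + (5 * h + 1)); last lia.
rewrite sum_nat_addn addnC; congr (_ + _); apply: eq_bigr => i _; apply: eq_bigr => t _.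
  by rewrite -(idist_shift i _ 1) muln1 -addnA (addnC (5 * h + 1)).
by rewrite (_ : 5 + (5 * h + 1) = 5 * h + 6) //; lia.
Qed.

Lemma cross_sumE h :
  cross_sum h = \sum_(0 <= i < 5) \sum_(0 <= t < 5) f (idist i (t + 6) + 2 * h).
Proof.
apply: eq_big_nat => i /andP[_ i_lt]; apply: eq_bigr => t _.
by rewrite (_ : t + (5 * h + 6) = t + 6 + 5 * h) ?idist_far //; lia.
Qed.
End DistanceSums.

Ltac eval_idist := rewrite /idist /hdist /divn /modn /subn /next_dist /near_dist /=.

Lemma dist_sum_id h : 3 * dist_sum id h = h * (50 * h ^ 2 + 69 * h + 43).
Proof.
have border h' : border_sum id h' = 25 * h' ^ 2 + 48 * h' + 9.
  elim: h' => [|h' IH]; first by rewrite /border_sum big_nat1 sum_nat5.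
  by rewrite border_sumS IH cross_sumE !sum_nat5; eval_idist; ring.
elim: h => [|h IH]; first by rewrite /dist_sum !big_nat1.
by rewrite dist_sumS !mulnDr IH border /block_sum !sum_nat5; eval_idist; ring.
Qed.

Lemma dist_sum_sqr h :
  3 * dist_sum (fun d => d ^ 2) h = 50 * h ^ 4 + 92 * h ^ 3 + 85 * h ^ 2 + 115 * h.
Proof.
have border h' :
    3 * border_sum (fun d => d ^ 2) h' = 100 * h' ^ 3 + 288 * h' ^ 2 + 323 * h' + 57.
  elim: h' => [|h' IH]; first by rewrite /border_sum big_nat1 sum_nat5.
  by rewrite border_sumS mulnDr IH cross_sumE !sum_nat5; eval_idist; ring.
elim: h => [|h IH]; first by rewrite /dist_sum !big_nat1.
by rewrite dist_sumS !mulnDr IH mulnCA border /block_sum !sum_nat5; eval_idist; ring.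
Qed.

Section Polyacene.
Variable h : nat.
Local Notation N := (5 * h + 1).

Lemma cols_gt0 : 0 < 2 * h + 1. Proof. by rewrite addn1. Qed.

Definition vtx (r c : nat) : Lvert h := (inord r, Ordinal (ltn_pmod c cols_gt0)).

Lemma vtx_eq r c r' c' : r < 2 -> r' < 2 -> c < 2 * h + 1 -> c' < 2 * h + 1 ->
  (vtx r c == vtx r' c') = (r == r') && (c == c').
Proof. by move=> *; rewrite /vtx xpair_eqE -!val_eqE /= !inordK // !modn_small. Qed.

Lemma vtxE (u : Lvert h) : u = vtx u.1 u.2.
Proof.
case: u => a b; rewrite /vtx inord_val; congr (_, _); apply: val_inj.
by rewrite /= modn_small.
Qed.

Lemma Ladj_vtx r c r' c' : r < 2 -> r' < 2 -> c < 2 * h + 1 -> c' < 2 * h + 1 ->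
  Ladj (vtx r c) (vtx r' c') =
  ((r == r') && ((c.+1 == c') || (c'.+1 == c))) || [&& c == c', r != r' & ~~ odd c].
Proof. by move=> *; rewrite /Ladj -!val_eqE /= !inordK // !modn_small. Qed.

Definition edge_set (n : nat) : {set Lvert h} :=
  [set vtx (end1_row (n %% 5)) (end1_col (n %/ 5) (n %% 5));
       vtx (end2_row (n %% 5)) (end2_col (n %/ 5) (n %% 5))].

Lemma index_bound (i : 'I_N) : i %% 5 < 5 /\ 5 * (i %/ 5) + i %% 5 < N.
Proof. by split; [rewrite ltn_pmod | have := ltn_ord i; lia]. Qed.

Lemma edge_set_is_edge (i : 'I_N) : is_Ledge (edge_set i).
Proof.
apply/existsP; exists (vtx (end1_row (i %% 5)) (end1_col (i %/ 5) (i %% 5))).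
apply/existsP; exists (vtx (end2_row (i %% 5)) (end2_col (i %/ 5) (i %% 5))).
rewrite /edge_set eqxx andbT; have [t_lt i_lt] := index_bound i.
have [? ? ? ?] := ends_bound h _ _ t_lt i_lt; rewrite Ladj_vtx //.
move: t_lt i_lt; move: (i %% 5) (i %/ 5) => t k.
by case5 t; unfold_ends => _; rewrite ?oddD ?oddM /=; lia.
Qed.

Definition edge_of (i : 'I_N) : Ledge h := exist _ (edge_set i) (edge_set_is_edge i).

Lemma edge_of_inj : injective edge_of.
Proof.
move=> i j /(congr1 val) /= E.
have [ti_lt i_lt] := index_bound i; have [tj_lt j_lt] := index_bound j.
have [? ? ? ?] := ends_bound h _ _ ti_lt i_lt; have [? ? ? ?] := ends_bound h _ _ tj_lt j_lt.
have end1 : vtx (end1_row (i %% 5)) (end1_col (i %/ 5) (i %% 5)) \in edge_set j.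
  by rewrite -E !inE eqxx.
have end2 : vtx (end2_row (i %% 5)) (end2_col (i %/ 5) (i %% 5)) \in edge_set j.
  by rewrite -E !inE eqxx orbT.
rewrite !inE !vtx_eq // in end1 end2.
by have := is_end_inj _ _ _ _ ti_lt tj_lt end1 end2 => ?; apply: val_inj => /=; lia.
Qed.

Lemma lineadj_edge_of (i j : 'I_N) : lineadj (edge_of i) (edge_of j) = (idist i j == 1).
Proof.
rewrite /lineadj /=; case: (eqVneq i j) => [->|neq_ij]; first by rewrite eqxx idist_nn.
rewrite (inj_eq edge_of_inj) neq_ij /=.
have [ti_lt i_lt] := index_bound i; have [tj_lt j_lt] := index_bound j.
have [? ? ? ?] := ends_bound h _ _ ti_lt i_lt; have [? ? ? ?] := ends_bound h _ _ tj_lt j_lt.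
rewrite setI_set2_neq0 !inE !vtx_eq //; apply: share_end_hdist => //.
by move: neq_ij; rewrite -val_eqE /=; lia.
Qed.

Lemma edge_of_onto (e : Ledge h) : exists i, e = edge_of i.
Proof.
case: e => A A_edge.
suff [i EA] : exists i : 'I_N, A = edge_set i by exists i; apply: val_inj.
case/existsP: A_edge => u /existsP[v /andP[uv /eqP EA]].
move: uv EA; rewrite (vtxE u) (vtxE v); case: u v => [r c] [r' c'] /=.
move: (ltn_ord r) (ltn_ord r') (ltn_ord c) (ltn_ord c') => ? ? ? ?.
rewrite Ladj_vtx // => /orP[/andP[/eqP Er /orP[]/eqP Ec] | /and3P[/eqP Ec r_neq c_even]] ->.
- have i_lt : 5 * (c %/ 2) + 1 + c %% 2 + 2 * r < N by lia.
  exists (Ordinal i_lt); rewrite /edge_set /=.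
  by congr [set vtx _ _; vtx _ _]; unfold_ends; lia.
- have i_lt : 5 * (c' %/ 2) + 1 + c' %% 2 + 2 * r' < N by lia.
  exists (Ordinal i_lt); rewrite /edge_set /= setUC.
  by congr [set vtx _ _; vtx _ _]; unfold_ends; lia.
have c_mod : c %% 2 = 0 by rewrite modn2 (negbTE c_even).
have i_lt : 5 * (c %/ 2) < N by lia.
exists (Ordinal i_lt); rewrite /edge_set /=.
case: (posnP r) => r0; [|rewrite setUC];
  by congr [set vtx _ _; vtx _ _]; unfold_ends; move: r_neq; lia.
Qed.

Lemma edge_of_bij : bijective edge_of.
Proof.
apply: inj_card_bij edge_of_inj _; rewrite -(card_codom edge_of_inj).
by apply/subset_leq_card/subsetP => e _; have [i ->] := edge_of_onto e; exact: codom_f.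
Qed.

Lemma edist_edge_of (i j : 'I_N) : edist (edge_of i) (edge_of j) = idist i j.
Proof.
have [dec edge_ofK decK] := edge_of_bij.
rewrite /edist (@gdist_eq _ _ _ (fun e => idist i (dec e))) ?edge_ofK // => [e|e f|e].
- by rewrite -[e]decK edge_ofK idist_eq0 (inj_eq edge_of_inj) eq_sym.
- by rewrite -[e]decK -[f]decK lineadj_edge_of !edge_ofK => /eqP; exact: idist_step.
rewrite -[e]decK edge_ofK; move: (dec e) => {e} j' D_gt0.
case: (ltngtP (idist i j') 1) => [|D_gt1|D1]; first by rewrite ltnNge D_gt0.
  have [m [m_lt adj geo]] := idist_pred h i j' (ltn_ord i) (ltn_ord j') D_gt1.
  by exists (edge_of (Ordinal m_lt)); rewrite ?lineadj_edge_of ?edge_ofK ?adj.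
by exists (edge_of i); rewrite ?lineadj_edge_of ?edge_ofK ?D1 ?idist_nn.
Qed.
End Polyacene.

Lemma pair_sum_edist (g : nat -> nat) h : g 0 = 0 ->
  2 * \sum_(e : Ledge h) \sum_(f : Ledge h | enum_rank e < enum_rank f) g (edist e f)
  = dist_sum g h.
Proof.
have [dec edge_ofK decK] := edge_of_bij h.
move=> g0; rewrite sum_rank_lt_pairs => [|e f|e]; last 2 first.
- by rewrite -[e]decK -[f]decK !edist_edge_of idist_sym.
- by rewrite -[e]decK edist_edge_of idist_nn.
rewrite (reindex (@edge_of h)) /=; last exact: onW_bij (edge_of_bij h).
under eq_bigr => i _.
  rewrite (reindex (@edge_of h)) /=; last exact: onW_bij (edge_of_bij h).
  under eq_bigr => j _ do rewrite edist_edge_of.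
  over.
by rewrite /dist_sum big_mkord; apply: eq_bigr => i _; rewrite big_mkord.
Qed.

Lemma We_formula h : 6 * We h = h * (50 * h ^ 2 + 69 * h + 43).
Proof. by rewrite -dist_sum_id -(pair_sum_edist id) // mulnA. Qed.

Lemma We2_formula h : 6 * We2 h = 50 * h ^ 4 + 92 * h ^ 3 + 85 * h ^ 2 + 115 * h.
Proof. by rewrite -dist_sum_sqr -(pair_sum_edist (fun d => d ^ 2)) // mulnA. Qed.

Local Open Scope ring_scope.

Theorem mainTheorem5 (h : nat) (hh : (1 <= h)%N) :
  (We h)%:R = (1 / 6 : rat) * h%:R * (50 * h%:R ^+ 2 + 69 * h%:R + 43)
  /\ WWe h = (1 / 6 : rat) * h%:R * (25 * h%:R ^+ 3 + 71 * h%:R ^+ 2 + 77 * h%:R + 79).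
Proof.
have lift6 n m : (6 * n)%N = m -> n%:R = m%:R / 6 :> rat by move=> <-; rewrite natrM; field.
rewrite /WWe (lift6 _ _ (We_formula h)) (lift6 _ _ (We2_formula h)) !natrM !natrD !natrX.
by split; field.
Qed.
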